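(* Let $\mathcal M$ be a closed subspace of $H^2_p$ with $S^*\mathcal M\subset\mathcal M$ and $\ker S^*\subset\mathcal M$. Then $R_{\mathcal M}=S^*P_{\mathcal M}S$, $R_{\mathcal M}S^*=S^*P_{\mathcal M}$, and $Q_{\mathcal M}=P_{\mathcal M}S$.
   Context: $S$ is the forward shift on $H^2_p$; $P_{\mathcal M}$ is the orthogonal projection of $H^2_p$ onto $\mathcal M$; $R_{\mathcal M}$ is the orthogonal projection of $H^2_p$ onto $S^*\mathcal M$; $Q_{\mathcal M}=SR_{\mathcal M}$. *)

From HB Require Import structures.
From mathcomp Require Import all_boot all_order all_algebra.
From mathcomp Require Import complex.
From mathcomp Require Import all_classical all_reals all_analysis.
Set Implicit Arguments. Unset Strict Implicit. Unset Printing Implicit Defensive.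
Import Order.TTheory GRing.Theory Num.Theory numFieldNormedType.Exports.
Local Open Scope ring_scope.
Local Open Scope classical_set_scope.

(* H^2_p is modelled (isometrically, via Taylor coefficients) as sequences
   f : nat -> 'I_p -> C of C^p-valued coefficients f n = \hat f(n),
   square-summable. *)
Definition seqp (R : realType) (p : nat) := nat -> 'I_p -> R[i].

Section H2.
Variables (R : realType) (p : nat).
Local Notation T := (seqp R p).

Definition sqmod (z : R[i]) : R := (complex.Re z) ^+ 2 + (complex.Im z) ^+ 2.

Definition coef_sqnorm (f : T) (n : nat) : R := \sum_(j < p) sqmod (f n j).

Definition H2 : set T := [set f | cvgn (series (coef_sqnorm f))].

Definition H2sqnorm (f : T) : R := limn (series (coef_sqnorm f)).

Definition coef_ip (f g : T) (n : nat) : R[i] :=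
  \sum_(j < p) f n j * (g n j)^*%C.
Definition ip (f g : T) : R[i] :=
  complex.Complex (limn (series (fun n => complex.Re (coef_ip f g n))))
          (limn (series (fun n => complex.Im (coef_ip f g n)))).

Definition addT (f g : T) : T := fun n j => f n j + g n j.
Definition scaleT (a : R[i]) (f : T) : T := fun n j => a * f n j.
Definition subT (f g : T) : T := fun n j => f n j - g n j.
Definition zeroT : T := fun _ _ => 0.

Definition closed_subspace (M : set T) : Prop :=
  M `<=` H2 /\ M zeroT /\
  (forall f g, M f -> M g -> M (addT f g)) /\
  (forall a f, M f -> M (scaleT a f)) /\
  (forall (x : nat -> T) (f : T), (forall k, M (x k)) -> H2 f ->
     (fun k => H2sqnorm (subT (x k) f)) @ \oo --> (0 : R) -> M f).

(* forward shift S (multiplication by z) and its adjoint S^* *)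
Definition S (f : T) : T := fun n => if n is n'.+1 then f n' else fun _ => 0.
Definition Sstar (f : T) : T := fun n => f n.+1.

Definition ker_Sstar : set T := [set f | H2 f /\ Sstar f = zeroT].

(* P is the orthogonal projection of H^2_p onto N :
   for every f in H^2_p, P f lies in N and f - P f is orthogonal to N.
   (Values of P outside H^2_p are irrelevant.) *)
Definition is_orth_proj (N : set T) (P : T -> T) : Prop :=
  forall f, H2 f -> N (P f) /\ (forall m, N m -> ip (subT f (P f)) m = 0).

End H2.

Arguments H2 {R p}.
Arguments S {R p}.
Arguments Sstar {R p}.
Arguments ker_Sstar {R p}.
Arguments closed_subspace {R p}.
Arguments is_orth_proj {R p}.
Arguments ip {R p}.

(** Since [S^* S = 1] and [1 - S S^*] is the projection [f |-> f(0)] onto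
    [ker S^*], the hypotheses make [M] invariant under [S S^*]: for [g] in [M],
    [S S^* g = g - (g - S S^* g)] with [g - S S^* g] in [ker S^* ⊆ M].
    Hence [S^* u] is orthogonal to [S^* M] whenever [u] is orthogonal to [M],
    which identifies [S^* P_M S] as the projection onto [S^* M].  Splitting
    [f = S S^* f + (f - S S^* f)] with the second summand in [M] gives
    [P_M f = P_M (S S^* f) + (f - S S^* f)], whence [R_M S^* = S^* P_M].
    Finally [g := P_M (S f)] has no constant term: [g(0)] lies in [M] and in
    [ker S^*], which is orthogonal to the range of [S], so
    [<g(0), g(0)> = <g - S f, g(0)> = 0]; thus [S S^* g = g]. *)
From HB Require Import structures.
From mathcomp Require Import all_boot all_order all_algebra.
From mathcomp Require Import complex.
From mathcomp Require Import all_classical all_reals all_analysis.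
From mathcomp Require Import ring lra.
Import Order.TTheory GRing.Theory Num.Theory numFieldNormedType.Exports.
Set Implicit Arguments. Unset Strict Implicit.
Local Open Scope ring_scope.
Local Open Scope classical_set_scope.

Section ComplexSquares.
Variable R : realType.
Implicit Types a b z : R[i].

Lemma sqmod_ge0 z : 0 <= sqmod z.
Proof. by rewrite /sqmod addr_ge0 // sqr_ge0. Qed.

Lemma sqmod_eq0 z : sqmod z = 0 -> z = 0.
Proof.
case: z => x y; rewrite /sqmod /= => /eqP.
rewrite paddr_eq0 ?sqr_ge0 // !sqrf_eq0 => /andP[/eqP -> /eqP ->] //.
Qed.

Lemma Re_mulcJ a b :
  complex.Re (a * b^*%C) = complex.Re a * complex.Re b + complex.Im a * complex.Im b.
Proof. by case: a => a1 a2; case: b => b1 b2 /=; ring. Qed.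

Lemma Im_mulcJ a b :
  complex.Im (a * b^*%C) = complex.Im a * complex.Re b - complex.Re a * complex.Im b.
Proof. by case: a => a1 a2; case: b => b1 b2 /=; ring. Qed.

Lemma Re_mulcJ_le a b : `|complex.Re (a * b^*%C)| <= sqmod a + sqmod b.
Proof.
rewrite Re_mulcJ /sqmod; case: a => a1 a2; case: b => b1 b2 /=.
have := sqr_ge0 (a1 - b1); have := sqr_ge0 (a1 + b1).
have := sqr_ge0 (a2 - b2); have := sqr_ge0 (a2 + b2).
by rewrite ler_norml; move=> *; apply/andP; split; nra.
Qed.

Lemma Im_mulcJ_le a b : `|complex.Im (a * b^*%C)| <= sqmod a + sqmod b.
Proof.
rewrite Im_mulcJ /sqmod; case: a => a1 a2; case: b => b1 b2 /=.
have := sqr_ge0 (a2 - b1); have := sqr_ge0 (a2 + b1).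
have := sqr_ge0 (a1 - b2); have := sqr_ge0 (a1 + b2).
by rewrite ler_norml; move=> *; apply/andP; split; nra.
Qed.

Lemma Re_mulcJ_self z : complex.Re (z * z^*%C) = sqmod z.
Proof. by rewrite Re_mulcJ /sqmod !expr2. Qed.

End ComplexSquares.

Section SeriesShift.
Variables (R : realType) (u v : R^nat).
Hypothesis v_shift : forall n, v n = u n.+1.

Lemma series_shiftS n : series u n.+1 = u 0%N + series v n.
Proof.
rewrite !seriesEnat /= big_nat_recl //; congr (_ + _).
by apply: eq_bigr => i _; rewrite v_shift.
Qed.

Lemma cvg_series_shiftS l : series v @ \oo --> l -> series u @ \oo --> u 0%N + l.
Proof.
move=> cv; rewrite -cvg_shiftS.
have -> : [sequence series u n.+1]_n = (fun n => u 0%N + series v n).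
  by apply: funext => n /=; rewrite series_shiftS.
exact: cvgD (cvg_cst _) cv.
Qed.

Lemma is_cvg_series_shiftS : cvgn (series v) -> cvgn (series u).
Proof. by move=> cv; apply: cvgP; apply: cvg_series_shiftS; exact: cv. Qed.

Lemma lim_series_shiftS :
  cvgn (series v) -> limn (series u) = u 0%N + limn (series v).
Proof. by move=> cv; apply: cvg_lim; [|apply: cvg_series_shiftS]. Qed.

Lemma is_cvg_series_tail : cvgn (series u) -> cvgn (series v).
Proof.
move=> cu; have -> : series v = (fun n => series u n.+1 - u 0%N).
  by apply: funext => n; rewrite series_shiftS addrC addKr.
have cuS : [sequence series u n.+1]_n @ \oo --> limn (series u) by rewrite cvg_shiftS.
by apply: cvgP; apply: cvgB cuS (cvg_cst _).
Qed.

End SeriesShift.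

Section H2Space.
Variables (R : realType) (p : nat).
Local Notation T := (seqp R p).
Implicit Types f g h k u : T.

Lemma coef_sqnorm_ge0 f n : 0 <= coef_sqnorm f n.
Proof. by rewrite sumr_ge0 // => j _; apply: sqmod_ge0. Qed.

Lemma subT_eq0 f g : subT f g = @zeroT R p -> f = g.
Proof.
move=> fg0; apply: funext => n; apply: funext => j.
by apply/eqP; rewrite -subr_eq0; apply/eqP; apply: (congr1 (fun F => F n j) fg0).
Qed.

Lemma H2_subT f g : H2 f -> H2 g -> H2 (subT f g).
Proof.
move=> Hf Hg; have cv := is_cvg_seriesD (is_cvg_seriesD Hf Hg) (is_cvg_seriesD Hf Hg).
apply: (series_le_cvg _ _ _ cv) => n; first exact: coef_sqnorm_ge0.
  by rewrite /= !addr_ge0 // coef_sqnorm_ge0.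
rewrite !fctE /coef_sqnorm -!big_split /=; apply: ler_sum => j _.
rewrite /sqmod /subT; case: (f n j) => a1 a2; case: (g n j) => b1 b2 /=.
have := sqr_ge0 (a1 + b1); have := sqr_ge0 (a2 + b2); nra.
Qed.

Lemma H2_S f : H2 f -> H2 (S f).
Proof. exact: (@is_cvg_series_shiftS R (coef_sqnorm (S f)) (coef_sqnorm f)). Qed.

Lemma H2_Sstar f : H2 f -> H2 (Sstar f).
Proof. exact: (@is_cvg_series_tail R (coef_sqnorm f) (coef_sqnorm (Sstar f))). Qed.

Lemma is_cvg_ip f g : H2 f -> H2 g ->
  cvgn (series (fun n => complex.Re (coef_ip f g n))) /\
  cvgn (series (fun n => complex.Im (coef_ip f g n))).
Proof.
move=> Hf Hg; have cv := is_cvg_seriesD Hf Hg.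
have dom n : 0 <= (coef_sqnorm f + coef_sqnorm g) n.
  by rewrite addr_ge0 // coef_sqnorm_ge0.
split; apply: normed_cvg; apply: (series_le_cvg _ dom _ cv) => n //=;
  rewrite /coef_ip fctE /coef_sqnorm -big_split raddf_sum /=;
  apply: le_trans (ler_norm_sum _ _ _) _; apply: ler_sum => j _.
- exact: Re_mulcJ_le.
- exact: Im_mulcJ_le.
Qed.

Lemma ipBl u h k : H2 u -> H2 h -> H2 k -> ip (subT u h) k = ip u k - ip h k.
Proof.
move=> Hu Hh Hk; have [cu1 cu2] := is_cvg_ip Hu Hk; have [ch1 ch2] := is_cvg_ip Hh Hk.
have coefB n : coef_ip (subT u h) k n = coef_ip u k n - coef_ip h k n.
  by rewrite /coef_ip -sumrB; apply: eq_bigr => j _; rewrite /subT mulrBl.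
rewrite /ip.
have -> : (fun n => complex.Re (coef_ip (subT u h) k n)) =
   (fun n => complex.Re (coef_ip u k n)) - (fun n => complex.Re (coef_ip h k n)).
  by apply: funext => n; rewrite coefB raddfB.
have -> : (fun n => complex.Im (coef_ip (subT u h) k n)) =
   (fun n => complex.Im (coef_ip u k n)) - (fun n => complex.Im (coef_ip h k n)).
  by apply: funext => n; rewrite coefB raddfB.
by rewrite (lim_seriesB cu1 ch1) (lim_seriesB cu2 ch2).
Qed.

Lemma ip0r f : ip f (@zeroT R p) = 0.
Proof.
have coef0 n : coef_ip f (@zeroT R p) n = 0.
  by rewrite /coef_ip big1 // => j _; rewrite conjc0 mulr0.
have series0 : series (fun _ => 0 : R) = cst 0.
  by apply: funext => n; rewrite seriesEnat /= big1.
rewrite /ip.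
have -> : (fun n => complex.Re (coef_ip f (@zeroT R p) n)) = cst 0.
  by apply: funext => n; rewrite coef0.
have -> : (fun n => complex.Im (coef_ip f (@zeroT R p) n)) = cst 0.
  by apply: funext => n; rewrite coef0.
by rewrite series0 lim_cst.
Qed.

Lemma ip_eq0 u : H2 u -> ip u u = 0 -> u = @zeroT R p.
Proof.
move=> Hu /(congr1 (@complex.Re R)) /=.
have -> : (fun n => complex.Re (coef_ip u u n)) = coef_sqnorm u.
  by apply: funext => n; rewrite raddf_sum; apply: eq_bigr => j _; exact: Re_mulcJ_self.
move=> lim0.
have coef0 n : coef_sqnorm u n = 0.
  apply/eqP; rewrite eq_le coef_sqnorm_ge0 andbT.
  have nd : nondecreasing_seq (series (coef_sqnorm u)).
    by apply: nondecreasing_series => m _ _; exact: coef_sqnorm_ge0.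
  have := nondecreasing_cvgn_le nd Hu n.+1; rewrite lim0 seriesSr.
  by apply: le_trans; rewrite lerDr sumr_ge0 // => i _; exact: coef_sqnorm_ge0.
apply: funext => n; apply: funext => j; apply: sqmod_eq0.
move: (coef0 n) => /eqP; rewrite psumr_eq0 => [|i _]; last exact: sqmod_ge0.
by move=> /allP /(_ j (mem_index_enum _)) /eqP.
Qed.

Lemma ip_shiftS f g h k : H2 h -> H2 k ->
  coef_ip f g 0 = 0 -> (forall n, coef_ip f g n.+1 = coef_ip h k n) ->
  ip f g = ip h k.
Proof.
move=> Hh Hk fg0 fgS; have [c1 c2] := is_cvg_ip Hh Hk.
have ReS n : complex.Re (coef_ip h k n) = complex.Re (coef_ip f g n.+1) by rewrite fgS.
have ImS n : complex.Im (coef_ip h k n) = complex.Im (coef_ip f g n.+1) by rewrite fgS.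
rewrite /ip (lim_series_shiftS ReS c1) (lim_series_shiftS ImS c2).
by rewrite fg0 !add0r.
Qed.

Lemma ip_Sstarl h k : H2 h -> H2 k -> ip (Sstar h) k = ip h (S k).
Proof.
move=> Hh Hk; symmetry; apply: ip_shiftS (H2_Sstar Hh) Hk _ (fun n => erefl).
by rewrite /coef_ip big1 // => j _; rewrite conjc0 mulr0.
Qed.

Lemma ip_Sl h k : H2 h -> H2 k -> ip (S h) k = ip h (Sstar k).
Proof.
move=> Hh Hk; apply: ip_shiftS Hh (H2_Sstar Hk) _ (fun n => erefl).
by rewrite /coef_ip big1 // => j _; rewrite mul0r.
Qed.

Lemma ip_S_ker_Sstar h k : H2 h -> ker_Sstar k -> ip (S h) k = 0.
Proof. by move=> Hh [Hk Sk0]; rewrite ip_Sl // Sk0 ip0r. Qed.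

Definition const_part f : T := subT f (S (Sstar f)).

Lemma ker_Sstar_const_part f : H2 f -> ker_Sstar (const_part f).
Proof.
move=> Hf; split; first exact: H2_subT Hf (H2_S (H2_Sstar Hf)).
by apply: funext => n; apply: funext => j; rewrite /Sstar /const_part /subT subrr.
Qed.

Lemma orth_proj_unique (N : set T) P f x :
  N `<=` H2 -> (forall a b, N a -> N b -> N (subT a b)) -> is_orth_proj N P ->
  H2 f -> N x -> (forall m, N m -> ip (subT f x) m = 0) -> P f = x.
Proof.
move=> NH NB HP Hf Nx xorth; have [NPf Pforth] := HP f Hf.
have Nd := NB _ _ NPf Nx.
have diffE : subT (subT f x) (subT f (P f)) = subT (P f) x.
  by apply: funext => n; apply: funext => j; rewrite /subT; ring.
apply: subT_eq0; apply: ip_eq0 (NH _ Nd) _.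
rewrite -{1}diffE ipBl ?xorth ?Pforth ?subrr //.
all: by [apply: NH | apply: H2_subT => //; apply: NH].
Qed.

Lemma closed_subspaceB (M : set T) : closed_subspace M ->
  forall a b, M a -> M b -> M (subT a b).
Proof.
move=> [_ [_ [Madd [Mscale _]]]] a b Ma Mb.
have -> : subT a b = addT a (scaleT (-1) b).
  by apply: funext => n; apply: funext => j; rewrite /subT /addT /scaleT mulN1r.
exact: Madd _ _ Ma (Mscale _ _ Mb).
Qed.

End H2Space.

Section ShiftInvariantSubspace.
Variables (R : realType) (p : nat) (M : set (seqp R p)) (P : seqp R p -> seqp R p).
Hypotheses (M_closed : closed_subspace M) (ker_Sstar_M : ker_Sstar `<=` M)
  (P_proj : is_orth_proj M P).

Let M_H2 : M `<=` H2. Proof. by case: M_closed. Qed.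
Let MB := closed_subspaceB M_closed.

Lemma const_part_mem g : M g -> M (const_part g).
Proof. by move=> Mg; apply/ker_Sstar_M/ker_Sstar_const_part/M_H2. Qed.

Lemma S_Sstar_mem g : M g -> M (S (Sstar g)).
Proof.
move=> Mg; have -> : S (Sstar g) = subT g (const_part g).
  by apply: funext => n; apply: funext => j; rewrite /const_part /subT; ring.
exact: MB Mg (const_part_mem Mg).
Qed.

Lemma is_orth_proj_Sstar_image : is_orth_proj (Sstar @` M) (fun f => Sstar (P (S f))).
Proof.
move=> f Hf; have [MPSf PSf_orth] := P_proj (H2_S Hf).
split=> [|_ [g Mg <-]]; first by exists (P (S f)).
have -> : subT f (Sstar (P (S f))) = Sstar (subT (S f) (P (S f))) by [].
rewrite ip_Sstarl ?PSf_orth //.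
- exact: S_Sstar_mem.
- exact: H2_subT (H2_S Hf) (M_H2 MPSf).
- exact/H2_Sstar/M_H2.
Qed.

Lemma orth_proj_Sstar_image Q : is_orth_proj (Sstar @` M) Q ->
  forall f, H2 f -> Q f = Sstar (P (S f)).
Proof.
move=> Q_proj f Hf; have [MSPSf PSf_orth] := is_orth_proj_Sstar_image Hf.
apply: orth_proj_unique Q_proj Hf MSPSf PSf_orth.
- by move=> _ [g Mg <-]; apply/H2_Sstar/M_H2.
- by move=> _ _ [a Ma <-] [b Mb <-]; exists (subT a b); first exact: MB.
Qed.

Lemma orth_proj_const_part f : H2 f ->
  P f = addT (P (S (Sstar f))) (const_part f).
Proof.
move=> Hf; have [MPSSf PSSf_orth] := P_proj (H2_S (H2_Sstar Hf)).
have [_ [_ [Madd _]]] := M_closed.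
apply: (orth_proj_unique M_H2 MB P_proj Hf) => [|m Mm].
  exact: Madd MPSSf (ker_Sstar_M (ker_Sstar_const_part Hf)).
rewrite -(PSSf_orth _ Mm); congr ip.
by apply: funext => n; apply: funext => j; rewrite /const_part /subT /addT; ring.
Qed.

Lemma const_part_proj_S f : H2 f -> const_part (P (S f)) = @zeroT R p.
Proof.
move=> Hf; set g := P (S f); have [Mg g_orth] := P_proj (H2_S Hf).
have Mg0 := const_part_mem Mg; have Hg0 := M_H2 Mg0.
have Hh : H2 (subT f (Sstar g)) by exact: H2_subT Hf (H2_Sstar (M_H2 Mg)).
have HSh := H2_S Hh.
have SfBg : subT (S f) g = subT (S (subT f (Sstar g))) (const_part g).
  by apply: funext => -[|n]; apply: funext => j; rewrite /const_part /subT /S /Sstar /=; ring.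
move: (g_orth _ Mg0); rewrite SfBg ipBl //.
rewrite (ip_S_ker_Sstar Hh (ker_Sstar_const_part (M_H2 Mg))) sub0r.
by move=> /eqP; rewrite oppr_eq0 => /eqP /(ip_eq0 Hg0).
Qed.

End ShiftInvariantSubspace.

Theorem lemma4p2 (R : realType) (p : nat) (M : set (seqp R p))
    (P_M R_M : seqp R p -> seqp R p) :
  closed_subspace M ->
  Sstar @` M `<=` M ->
  ker_Sstar `<=` M ->
  is_orth_proj M P_M ->
  is_orth_proj (Sstar @` M) R_M ->
  (forall f, H2 f -> R_M f = Sstar (P_M (S f))) /\
  (forall f, H2 f -> R_M (Sstar f) = Sstar (P_M f)) /\
  (forall f, H2 f -> S (R_M f) = P_M (S f)).
Proof.
move=> M_closed _ ker_Sstar_M P_proj R_proj.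
have R_M_E := orth_proj_Sstar_image M_closed ker_Sstar_M P_proj R_proj.
split=> [//|]; split=> f Hf.
- rewrite R_M_E; last exact: H2_Sstar.
  rewrite (orth_proj_const_part M_closed ker_Sstar_M P_proj Hf).
  by apply: funext => n; apply: funext => j;
    rewrite /Sstar /addT /const_part /subT /S subrr addr0.
- rewrite R_M_E //; apply/esym/subT_eq0.
  exact: (const_part_proj_S M_closed ker_Sstar_M P_proj Hf).
Qed.
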